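(* Let $s,t\ge 1$ be integers and let $H$ be a bipartite graph containing a subgraph $K$ isomorphic to the complete bipartite graph $K_{s,t}$, such that every vertex $v \in V(H)$ is at distance at most one from $V(K)$. Then the maximum number of copies of $H$ in a triangle-free $n$-vertex graph is asymptotically attained by a complete bipartite graph; that is, \[ \mathrm{ex}(n,H,K_3) = \max_{0\le m\le n} H(K_{m,n-m}) + o(n^{v(H)}) \quad (n\to\infty). \]
   Context: For graphs $H$ and $F$, $\mathrm{ex}(n,H,F)$ denotes the maximum number of (not necessarily induced) copies of $H$ in an $n$-vertex graph that does not contain $F$ as a subgraph; in particular $\mathrm{ex}(n,H,K_3)$ is the maximum number of copies of $H$ in a triangle-free $n$-vertex graph. $H(G)$ denotes the number of (not necessarily induced, unlabelled) copies of $H$ in $G$, $v(H)$ is the number of vertices of $H$, and $K_{m,n-m}$ is the complete bipartite graph with parts of sizes $m$ and $n-m$. The distance from a vertex $v$ to a vertex set $U$ is the minimum graph distance from $v$ to a vertex of $U$ (zero if $v\in U$). *)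

From mathcomp Require Import all_boot all_order all_algebra.
Set Implicit Arguments. Unset Strict Implicit. Unset Printing Implicit Defensive.

Definition is_graph (n : nat) (e : rel 'I_n) : Prop :=
  symmetric e /\ irreflexive e.

Definition inj_homb (h n : nat) (H : rel 'I_h) (G : rel 'I_n)
  (f : {ffun 'I_h -> 'I_n}) : bool :=
  injectiveb f && [forall x, forall y, H x y ==> G (f x) (f y)].

(* H(G): number of (unlabelled, not necessarily induced) copies of H in G,
   i.e. the number of distinct subgraphs (vertex set, edge set) of G that are
   images of H under an injective homomorphism (= subgraphs isomorphic to H).
   Edges are stored as ordered pairs (both orientations). *)
Definition copies (h n : nat) (H : rel 'I_h) (G : rel 'I_n) : nat :=
  #| [set ((f : {ffun 'I_h -> 'I_n}) @: setT, [set ((f : {ffun 'I_h -> 'I_n}) p.1, f p.2) | p in [set p : 'I_h * 'I_h | H p.1 p.2]])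
      | f in [pred f : {ffun 'I_h -> 'I_n} | inj_homb H G f]] |.

Definition graph_of (n : nat) (g : {ffun 'I_n * 'I_n -> bool}) : rel 'I_n :=
  fun x y => g (x, y).

Definition is_graphb (n : nat) (g : {ffun 'I_n * 'I_n -> bool}) : bool :=
  [forall x, forall y, g (x, y) == g (y, x)] && [forall x, ~~ g (x, x)].

Definition triangle_freeb (n : nat) (G : rel 'I_n) : bool :=
  ~~ [exists x, exists y, exists z, [&& G x y, G y z & G z x]].

Definition ex_K3 (h : nat) (H : rel 'I_h) (n : nat) : nat :=
  \max_(g : {ffun 'I_n * 'I_n -> bool} | is_graphb g && triangle_freeb (graph_of g))
     copies H (graph_of g).

Definition Kbip (n m : nat) : rel 'I_n := fun x y => (x < m) != (y < m).

Definition max_bip (h : nat) (H : rel 'I_h) (n : nat) : nat :=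
  \max_(m < n.+1) copies H (@Kbip n m).

Definition bipartite (h : nat) (H : rel 'I_h) : Prop :=
  exists c : 'I_h -> bool, forall x y, H x y -> c x != c y.

Definition dist_le1 (h : nat) (H : rel 'I_h) (U : {set 'I_h}) (v : 'I_h) : Prop :=
  v \in U \/ exists2 u, u \in U & H v u.

From mathcomp Require Import all_boot all_order all_algebra.
From mathcomp Require Import zify ring.
Import Order.TTheory GRing.Theory Num.Theory.
Set Implicit Arguments. Unset Strict Implicit. Unset Printing Implicit Defensive.

(** Counting labelled homomorphisms suffices: H(G) |Aut H| is the number of injective
    homomorphisms H -> G, and at most h^2 n^(h-1) maps 'I_h -> 'I_n are not injective.
    Let p and q be the sizes of the colour classes of H.  Colour-preserving maps into
    K_{m,n-m} give m^p (n-m)^q + m^q (n-m)^p homomorphisms, so it is enough to bound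
    hom(H, G) by the maximum M of this quantity over m when G is triangle-free.

    A homomorphism of H is a homomorphism psi of K_{s,t} together with, for every other
    vertex v, an image adjacent to psi (anchor v), where anchor v is a neighbour of v in
    K.  By AM-GM the product of these degrees is dominated by a convex combination of
    d(psi i)^(q-t) d(psi j)^(p-s) with i, j on the two sides of K, and once the edge
    (psi i, psi j) = (a, b) is fixed there are at most d(a)^(t-1) d(b)^(s-1) choices
    for psi.  Hence hom(H, G) <= sum over edges ab of d(a)^(q-1) d(b)^(p-1).  In a
    triangle-free graph d(a) + d(b) <= n on every edge, which makes the symmetrised term
    d(a)^(q-1) d(b)^(p-1) + d(a)^(p-1) d(b)^(q-1) at most (M/n) (1/d(a) + 1/d(b)), and
    these weights sum to at most 2n over the ordered edges. *)

Definition homb (h n : nat) (H : rel 'I_h) (G : rel 'I_n) (f : {ffun 'I_h -> 'I_n}) : bool :=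
  [forall x, forall y, H x y ==> G (f x) (f y)].

Lemma inj_homb_homb h n (H : rel 'I_h) (G : rel 'I_n) f : inj_homb H G f -> homb H G f.
Proof. by case/andP. Qed.

Lemma card_family_ffun (aT rT : finType) (F : aT -> pred rT) :
  #|[set f : {ffun aT -> rT} | [forall x, f x \in F x]]| = \prod_x #|F x|.
Proof.
have := card_family F; rewrite foldrE big_map big_enum /= => <-.
by apply: eq_card => f; rewrite inE; apply/forallP/familyP.
Qed.

Lemma card_ord_lt n m : m <= n -> #|[set y : 'I_n | y < m]| = m.
Proof.
move=> le_mn; have widen_inj : injective (widen_ord le_mn).
  by move=> a b e; apply: val_inj; exact: (congr1 val e).
rewrite -[RHS]card_ord -(card_imset _ widen_inj).
apply: eq_card => y; rewrite inE; apply/idP/imsetP => [ym|[z _ ->]]; last by rewrite /= ltn_ord.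
by exists (Ordinal ym) => //; apply: val_inj.
Qed.

Lemma card_ord_geq n m : m <= n -> #|[set y : 'I_n | ~~ (y < m)]| = n - m.
Proof.
move=> le_mn; have := cardsC [set y : 'I_n | y < m]; rewrite card_ord_lt // card_ord => E.
by rewrite -[n in n - m]E addKn; apply: eq_card => y; rewrite !inE.
Qed.

Lemma eq_copies h n (H : rel 'I_h) (G1 G2 : rel 'I_n) : G1 =2 G2 -> copies H G1 = copies H G2.
Proof.
move=> eG; have eP f : inj_homb H G1 f = inj_homb H G2 f.
  by congr (_ && _); apply: eq_forallb => x; apply: eq_forallb => y; rewrite eG.
rewrite /copies; apply: eq_card => c; apply/imsetP/imsetP => -[f fP ->].
  by exists f; rewrite // inE -eP.
by exists f; rewrite // inE eP.
Qed.

Section NonInjective.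
Variables h n : nat.

Lemma card_ffun_eq_at (u v : 'I_h) : u != v ->
  #|[set f : {ffun 'I_h -> 'I_n} | f u == f v]| <= n ^ h.-1.
Proof.
move=> uv; pose F (f : {ffun 'I_h -> 'I_n}) : {ffun {k : 'I_h | k != u} -> 'I_n} :=
  [ffun k => f (val k)].
rewrite -(card_in_imset (f := F)); last first.
  move=> f1 f2; rewrite !inE => /eqP e1 /eqP e2 eF; apply/ffunP => k.
  have E k' (k'u : k' != u) : f1 k' = f2 k'.
    by have := congr1 (fun g : {ffun {k : 'I_h | k != u} -> 'I_n} => g (exist _ k' k'u)) eF;
      rewrite !ffunE.
  by case: (eqVneq k u) => [->|]; [rewrite e1 e2; apply: E; rewrite eq_sym | apply: E].
apply: leq_trans (max_card _) _.
by rewrite card_ffun card_ord card_sig cardC1 card_ord.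
Qed.

Lemma card_noninj_ffun : #|[set f : {ffun 'I_h -> 'I_n} | ~~ injectiveb f]| <= h * h * n ^ h.-1.
Proof.
pose collide (f : {ffun 'I_h -> 'I_n}) (p : 'I_h * 'I_h) := (p.1 != p.2) && (f p.1 == f p.2).
have collideP (f : {ffun 'I_h -> 'I_n}) : ~~ injectiveb f -> [exists p, collide f p].
  apply: contraR; rewrite negb_exists => /forallP nc; apply/injectiveP.
  by move=> x y exy; apply/eqP; move: (nc (x, y)); rewrite /collide /= exy eqxx andbT negbK.
apply: (@leq_trans (\sum_(f : {ffun 'I_h -> 'I_n}) \sum_(p : 'I_h * 'I_h) collide f p)).
  set A := [set f | _]; rewrite -sum1_card [X in _ <= X](bigID (mem A)) /=.
  apply: leq_trans (leq_addr _ _); apply: leq_sum => f /[!inE] /collideP /existsP [p cp].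
  by rewrite (bigD1 p) //= cp.
rewrite exchange_big /=; apply: (@leq_trans (\sum_(p : 'I_h * 'I_h) n ^ h.-1)); last first.
  by rewrite sum_nat_const card_prod !card_ord.
apply: leq_sum => p _; case: (eqVneq p.1 p.2) => [e|ne].
  by rewrite big1 // => f _; rewrite /collide e eqxx.
rewrite (leq_trans _ (card_ffun_eq_at ne)) // -sum1_card [X in _ <= X]big_mkcond /=.
by apply: eq_leq; apply: eq_bigr => f _; rewrite inE /collide ne; case: eqP.
Qed.

Lemma card_hom_le_inj (H : rel 'I_h) (G : rel 'I_n) :
  #|[set f | homb H G f]| <= #|[set f | inj_homb H G f]| + h * h * n ^ h.-1.
Proof.
apply: leq_trans (leq_add (leqnn _) card_noninj_ffun); apply: leq_trans (leq_card_setU _ _).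
by apply/subset_leq_card/subsetP => f; rewrite !inE /inj_homb /homb => ->; case: injectiveb.
Qed.

End NonInjective.

Section Automorphisms.
Variables (h n : nat) (H : rel 'I_h) (G : rel 'I_n).

Definition edge_set := [set p : 'I_h * 'I_h | H p.1 p.2].
Definition edge_img m (f : {ffun 'I_h -> 'I_m}) := [set (f p.1, f p.2) | p in edge_set].
Definition copy_of (f : {ffun 'I_h -> 'I_n}) := (f @: setT, edge_img f).
Definition aut := [set s : {ffun 'I_h -> 'I_h} | inj_homb H H s && (edge_img s == edge_set)].
Definition precomp (f : {ffun 'I_h -> 'I_n}) (s : {ffun 'I_h -> 'I_h}) := [ffun x => f (s x)].

Lemma aut_gt0 : 0 < #|aut|.
Proof.
apply/card_gt0P; exists [ffun x => x]; rewrite inE /inj_homb -andbA; apply/and3P; split.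
- by apply/injectiveP => x y; rewrite !ffunE.
- by apply/forallP => x; apply/forallP => y; rewrite !ffunE; apply/implyP.
by apply/eqP; rewrite /edge_img -[RHS]imset_id; apply: eq_imset => -[x y] /=; rewrite !ffunE.
Qed.

Section Fiber.
Variable f0 : {ffun 'I_h -> 'I_n}.
Hypothesis f0_inj_hom : inj_homb H G f0.

Lemma precomp_aut s : s \in aut ->
  inj_homb H G (precomp f0 s) && (copy_of (precomp f0 s) == copy_of f0).
Proof.
case/andP: f0_inj_hom => /injectiveP inj0 /forallP hom0.
rewrite inE => /andP [/andP [/injectiveP sinj /forallP shom] /eqP sE].
rewrite /inj_homb -andbA; apply/and3P; split.
- by apply/injectiveP => x y; rewrite !ffunE => /inj0 /sinj.
- apply/forallP => x; apply/forallP => y; apply/implyP => hxy; rewrite !ffunE.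
  by apply: (implyP (forallP (hom0 (s x)) (s y))); apply: (implyP (forallP (shom x) y)).
have sT : s @: setT = setT.
  by apply/eqP; rewrite eqEcard subsetT (card_imset _ sinj) /=.
apply/eqP; congr (_, _).
  by rewrite -[in RHS]sT -imset_comp; apply: eq_imset => x; rewrite /= ffunE.
by rewrite /edge_img -[in RHS]sE -imset_comp; apply: eq_imset => p; rewrite /= !ffunE.
Qed.

Lemma same_copy_precomp f : inj_homb H G f -> copy_of f = copy_of f0 ->
  exists2 s, s \in aut & f = precomp f0 s.
Proof.
case/andP: f0_inj_hom => /injectiveP inj0 _.
move=> /andP [/injectiveP injf _] [eV eE].
pose s : {ffun 'I_h -> 'I_h} := [ffun x => odflt x [pick y | f0 y == f x]].
have sE x : f0 (s x) = f x.
  rewrite ffunE; case: pickP => [y /eqP //| none].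
  have /imsetP [y _ e] : f x \in f0 @: setT by rewrite -eV imset_f.
  by have := none y; rewrite e eqxx.
have sinj : injective s by move=> x y e; apply: injf; rewrite -!sE e.
have shom x y : H x y -> H (s x) (s y).
  move=> hxy; have /imsetP [p /[!inE] hp [e1 e2]] : (f x, f y) \in edge_img f0.
    by rewrite -eE; apply/imsetP; exists (x, y); rewrite ?inE.
  by rewrite (inj0 _ _ (etrans (sE x) e1)) (inj0 _ _ (etrans (sE y) e2)).
exists s; last by apply/ffunP => x; rewrite ffunE sE.
rewrite inE /inj_homb -andbA; apply/and3P; split; first exact/injectiveP.
  by apply/forallP => x; apply/forallP => y; apply/implyP; apply: shom.
rewrite eqEcard; apply/andP; split.
  by apply/subsetP => q /imsetP [p /[!inE] hp ->]; apply: shom.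
rewrite card_in_imset // => -[x1 y1] [x2 y2] _ _ [/sinj -> /sinj ->] //.
Qed.

Lemma card_copy_fiber :
  #|[set f | inj_homb H G f && (copy_of f == copy_of f0)]| = #|aut|.
Proof.
have inj0 : injective f0 by case/andP: f0_inj_hom => /injectiveP.
have -> : [set f | inj_homb H G f && (copy_of f == copy_of f0)] = precomp f0 @: aut.
  apply/setP => f; rewrite inE; apply/idP/imsetP => [/andP [fP /eqP] | [s sA ->]].
    by case/(same_copy_precomp fP) => s; exists s.
  exact: precomp_aut.
rewrite card_in_imset // => s1 s2 _ _ e; apply/ffunP => x; apply: inj0.
by have := congr1 (fun g : {ffun 'I_h -> 'I_n} => g x) e; rewrite !ffunE.
Qed.

End Fiber.

Lemma copies_mul_aut : copies H G * #|aut| = #|[set f | inj_homb H G f]|.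
Proof.
rewrite -[RHS]sum1_card (partition_big_imset copy_of) /= /copies.
have -> : [set copy_of f | f in [pred f | inj_homb H G f]] =
          copy_of @: [set f | inj_homb H G f].
  by apply/setP => c; apply/imsetP/imsetP => -[f fA ->]; exists f; rewrite ?inE in fA *.
rewrite -sum_nat_const; apply: eq_bigr => _ /imsetP [f0 /[!inE] f0P ->].
by rewrite -(card_copy_fiber f0P) -sum1_card; apply: eq_bigl => f; rewrite !inE.
Qed.

End Automorphisms.

Definition bip_maps n p q m := m ^ p * (n - m) ^ q + m ^ q * (n - m) ^ p.

Section CompleteBipartite.
Variables (h n m : nat) (H : rel 'I_h).
Hypothesis le_mn : m <= n.

Lemma card_ffun_sides (P : pred 'I_h) :
  #|[set f : {ffun 'I_h -> 'I_n} | [forall v, (f v < m) == P v]]| =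
    m ^ #|[set v | P v]| * (n - m) ^ #|[set v | ~~ P v]|.
Proof.
pose side v := if P v then [pred y : 'I_n | y < m] else [pred y : 'I_n | ~~ (y < m)].
rewrite (eq_card (B := [set f : {ffun 'I_h -> 'I_n} | [forall v, f v \in side v]])); last first.
  move=> f; rewrite !inE; apply: eq_forallb => v.
  by rewrite /side; case: (P v); rewrite inE; case: (f v < m).
rewrite card_family_ffun (bigID P) /= -!prod_nat_const.
congr (_ * _); apply: eq_big => [v|v Pv]; rewrite ?inE // /side.
  by rewrite Pv -[RHS](card_ord_lt le_mn); apply: eq_card => y; rewrite !inE.
by rewrite (negbTE Pv) -[RHS](card_ord_geq le_mn); apply: eq_card => y; rewrite !inE.
Qed.

Lemma card_hom_Kbip_ge (col : pred 'I_h) : (forall x y, H x y -> col x != col y) -> 0 < h ->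
  bip_maps n #|[set v | col v]| #|[set v | ~~ col v]| m <= #|[set f | homb H (@Kbip n m) f]|.
Proof.
move=> col_proper h_gt0.
have ncolK : #|[set v | ~~ ~~ col v]| = #|[set v | col v]|.
  by apply: eq_card => v; rewrite !inE negbK.
rewrite /bip_maps -card_ffun_sides -ncolK -(card_ffun_sides (fun v => ~~ col v)).
set S1 := [set f | [forall v, _ == col v]]; set S2 := [set f | [forall v, _ == ~~ col v]].
have -> : #|S1| + #|S2| = #|S1 :|: S2|.
  rewrite -cardsUI; suff -> : S1 :&: S2 = set0 by rewrite cards0 addn0.
  apply/setP => f; rewrite !inE; apply/negP => /andP [/forallP S1f /forallP S2f].
  by move: (S1f (Ordinal h_gt0)) (S2f (Ordinal h_gt0)); case: (col _); case: (_ < m).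
have side_hom (P : pred 'I_h) (f : {ffun 'I_h -> 'I_n}) : (forall x y, H x y -> P x != P y) ->
    [forall v, (f v < m) == P v] -> homb H (@Kbip n m) f.
  move=> P_proper /forallP Pf; apply/forallP => x; apply/forallP => y; apply/implyP => hxy.
  by rewrite /Kbip (eqP (Pf x)) (eqP (Pf y)); apply: P_proper.
apply/subset_leq_card/subsetP => f; rewrite !inE => /orP [] Hf; apply: (side_hom _ _ _ Hf).
  exact: col_proper.
by move=> x y /col_proper; case: (col x); case: (col y).
Qed.

End CompleteBipartite.

Lemma max_bip_le_ex_K3 h (H : rel 'I_h) n : max_bip H n <= ex_K3 H n.
Proof.
apply/bigmax_leqP => m _; pose g : {ffun 'I_n * 'I_n -> bool} := [ffun p => @Kbip n m p.1 p.2].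
have -> : copies H (@Kbip n m) = copies H (graph_of g).
  by apply: eq_copies => x y; rewrite /graph_of ffunE.
apply: (leq_bigmax_cond (F := fun g => copies H (graph_of g))); apply/andP; split.
  apply/andP; split; apply/forallP => x; last by rewrite ffunE /Kbip eqxx.
  by apply/forallP => y; rewrite !ffunE /Kbip; case: (x < m); case: (y < m).
apply/negP => /existsP [x] /existsP [y] /existsP [z]; rewrite /graph_of !ffunE /Kbip.
by case: (x < m); case: (y < m); case: (z < m).
Qed.

Definition max_bip_maps n p q := \max_(m < n.+1) bip_maps n p q m.

Lemma pow_ratio_mono x y z q : x <= z -> 0 < q -> x ^ q * (z + y) <= z ^ q * (x + y).
Proof.
case: q => // q le_xz _; rewrite !expnS !mulnDr.
have le_pow : x ^ q <= z ^ q by case: (q) => [|r]; rewrite ?expn0 // leq_exp2r.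
apply: leq_add; last by rewrite leq_mul // leq_mul.
by rewrite [z * _ * x]mulnC mulnA [x * _ * z]mulnC mulnA [z * x]mulnC leq_mul.
Qed.

Lemma bip_ratio_mono x y z p q : x <= z -> 0 < p -> 0 < q ->
  (x ^ q * y ^ p + x ^ p * y ^ q) * (z + y) <= (z ^ q * y ^ p + z ^ p * y ^ q) * (x + y).
Proof.
move=> le_xz p_gt0 q_gt0; rewrite !mulnDl.
by apply: leq_add; rewrite mulnAC [_ * y ^ _ * _]mulnAC leq_mul // pow_ratio_mono.
Qed.

Lemma edge_weight_le x y n p q : 0 < x -> 0 < y -> x + y <= n -> 0 < p -> 0 < q ->
  ((x ^ q.-1 * y ^ p.-1 + x ^ p.-1 * y ^ q.-1)%:R
    <= (max_bip_maps n p q)%:R / n%:R * (x%:R^-1 + y%:R^-1) :> rat)%R.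
Proof.
move=> x_gt0 y_gt0 le_xy_n p_gt0 q_gt0; set M := max_bip_maps n p q.
have n_gt0 : 0 < n by apply: leq_trans le_xy_n; rewrite addn_gt0 x_gt0.
have bound : (x ^ q * y ^ p + x ^ p * y ^ q) * n <= M * (x + y).
  have le_x_ny : x <= n - y by lia.
  have := bip_ratio_mono y le_x_ny p_gt0 q_gt0; rewrite subnK; last by lia.
  move/leq_trans; apply; rewrite leq_mul2r; apply/orP; right.
  have y_lt : y < n.+1 by lia.
  apply: leq_trans (leq_bigmax (Ordinal y_lt)); rewrite /bip_maps /=.
  by rewrite [y ^ q * _]mulnC [y ^ p * _]mulnC addnC.
have predE (k : nat) z : 0 < k -> z ^ k = z * z ^ k.-1 by move=> k_gt0; rewrite -expnS prednK.
rewrite !(predE _ _ p_gt0) !(predE _ _ q_gt0) in bound.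
have -> : (M%:R / n%:R * (x%:R^-1 + y%:R^-1) = (M * (x + y))%:R / (n * x * y)%:R :> rat)%R.
  by rewrite !natrM natrD; field; rewrite !pnatr_eq0 -!lt0n x_gt0 y_gt0 n_gt0.
rewrite ler_pdivlMr ?ltr0n ?muln_gt0 ?x_gt0 ?y_gt0 ?n_gt0 // -natrM ler_nat.
by apply: leq_trans bound; apply: eq_leq; ring.
Qed.

Definition deg n (G : rel 'I_n) (a : 'I_n) := #|[set u | G a u]|.

Section TriangleFree.
Variables (n : nat) (G : rel 'I_n).
Hypothesis G_sym : symmetric G.
Hypothesis G_tf : forall a b u, G a b -> G b u -> G u a -> False.

Lemma deg_add_leq a b : G a b -> deg G a + deg G b <= n.
Proof.
move=> Gab; rewrite /deg -cardsUI.
suff -> : [set u | G a u] :&: [set u | G b u] = set0.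
  by rewrite cards0 addn0 -[X in _ <= X](card_ord n) max_card.
apply/setP => u; rewrite !inE; apply/negP => /andP [Gau Gbu].
by apply: (G_tf Gab Gbu); rewrite G_sym.
Qed.

Lemma deg_gt0 a b : G a b -> 0 < deg G a.
Proof. by move=> Gab; apply/card_gt0P; exists b; rewrite inE. Qed.

Lemma big_edges_swap (R : Type) (idx : R) (op : Monoid.com_law idx) (F : 'I_n -> 'I_n -> R) :
  \big[op/idx]_a \big[op/idx]_(b | G a b) F a b = \big[op/idx]_a \big[op/idx]_(b | G a b) F b a.
Proof.
rewrite (exchange_big_dep predT) //=; apply: eq_bigr => a _; apply: eq_bigl => b.
by rewrite G_sym.
Qed.

Lemma sum_edges_inv_deg :
  (\sum_a \sum_(b | G a b) ((deg G a)%:R^-1 + (deg G b)%:R^-1) <= n%:R *+ 2 :> rat)%R.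
Proof.
rewrite mulr2n; under eq_bigr do rewrite big_split /=; rewrite big_split /=.
have sum_inv : (\sum_a \sum_(b | G a b) (deg G a)%:R^-1 <= n%:R :> rat)%R.
  have -> : (n%:R = \sum_(a : 'I_n) 1 :> rat)%R by rewrite sumr_const card_ord.
  apply: ler_sum => a _.
  rewrite sumr_const (_ : #|_| = deg G a); last by apply: eq_card => b; rewrite inE.
  rewrite -[X in (X <= _)%R]mulr_natl.
  by case: (posnP (deg G a)) => [->|d_gt0]; rewrite ?mul0r // mulfV // pnatr_eq0 -lt0n.
by rewrite lerD // (@big_edges_swap rat 0%R _ (fun a b => (deg G b)%:R^-1)%R).
Qed.

Lemma sum_edges_deg_pow p q : 0 < p -> 0 < q ->
  \sum_a \sum_(b | G a b) deg G a ^ q.-1 * deg G b ^ p.-1 <= max_bip_maps n p q.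
Proof.
move=> p_gt0 q_gt0; set M := max_bip_maps n p q.
have [n0|n_gt0] := posnP n.
  by rewrite big1 // => a; exfalso; case: a; rewrite n0.
rewrite -(leq_pmul2r (isT : 0 < 2)) muln2 -addnn [X in X + _]big_edges_swap -big_split /=.
under eq_bigr do rewrite -big_split /=.
rewrite -(ler_nat rat) natr_sum.
apply: (@le_trans _ _
    (\sum_a \sum_(b | G a b) (M%:R / n%:R * ((deg G a)%:R^-1 + (deg G b)%:R^-1)) : rat)%R).
  apply: ler_sum => a _; rewrite natr_sum; apply: ler_sum => b Gab.
  rewrite addnC [(deg G b ^ q.-1 * _)%N]mulnC.
  apply: edge_weight_le => //; [exact: deg_gt0 Gab | | exact: deg_add_leq].
  by apply: (deg_gt0 (b := a)); rewrite G_sym.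
under eq_bigr do rewrite -mulr_sumr.
rewrite -mulr_sumr (_ : (M * 2)%:R = M%:R / n%:R * (n%:R *+ 2) :> rat)%R.
  by rewrite ler_wpM2l ?divr_ge0 // sum_edges_inv_deg.
by rewrite natrM mulr_natr mulrnAr divfK // pnatr_eq0 -lt0n.
Qed.

End TriangleFree.

Lemma prod_const_but_one (I : finType) (P : pred I) (i : I) (w : nat) (F : I -> nat) :
  P i -> F i = 1 -> (forall k, P k -> k != i -> F k = w) ->
  \prod_(k | P k) F k = w ^ #|[set k | P k]|.-1.
Proof.
move=> Pi Fi Fk; rewrite (bigD1 i) //= Fi mul1n.
rewrite (eq_bigr (fun _ => w)); last by move=> k /andP [Pk ki]; apply: Fk.
rewrite prod_nat_const (cardsD1 i) inE Pi add1n /=; congr (_ ^ _).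
by apply: eq_card => k; rewrite !inE andbC.
Qed.

Section CompleteBipartiteImages.
Variables (s t n : nat) (G : rel 'I_n).
Hypothesis G_sym : symmetric G.

Let Khomb := homb (@Kbip (s + t) s) G.

Lemma card_Khom_at_edge (i j : 'I_(s + t)) a b : i < s -> s <= j ->
  #|[set psi | Khomb psi && ((psi i, psi j) == (a, b))]| <= deg G a ^ t.-1 * deg G b ^ s.-1.
Proof.
move=> lt_is le_sj.
have ji : j != i by apply: contraTneq le_sj => ->; rewrite -ltnNge.
pose F k := if k == i then pred1 a else if k == j then pred1 b
            else if k < s then [pred y | G b y] else [pred y | G a y].
apply: leq_trans (_ : _ <= #|[set psi : {ffun 'I_(s + t) -> 'I_n} | [forall k, psi k \in F k]]|) _.
  apply/subset_leq_card/subsetP => psi; rewrite !inE => /andP [/forallP Kpsi /eqP [psi_i psi_j]].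
  apply/forallP => k; rewrite /F; case: eqP => [->|ki]; first by rewrite inE psi_i.
  case: eqP => [->|kj]; first by rewrite inE psi_j.
  case: ifP => ks; rewrite inE.
    by rewrite -psi_j G_sym; apply: (implyP (forallP (Kpsi k) j)); rewrite /Kbip ks ltnNge le_sj.
  by rewrite -psi_i; apply: (implyP (forallP (Kpsi i) k)); rewrite /Kbip ks lt_is.
have card_Fs (k : 'I_(s + t)) : k < s -> k != i -> #|F k| = deg G b.
  move=> ks ki; rewrite /F (negbTE ki) ks ifN; first by apply: eq_card => y; rewrite !inE.
  by apply: contraTneq ks => ->; rewrite -leqNgt.
have card_Ft (k : 'I_(s + t)) : ~~ (k < s) -> k != j -> #|F k| = deg G a.
  move=> ks kj; rewrite /F (negbTE kj) (negbTE ks) ifN; first by apply: eq_card => y; rewrite !inE.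
  by apply: contraTneq ks => ->; rewrite lt_is.
have card_Fi : #|F i| = 1 by rewrite /F eqxx card1.
have card_Fj : #|F j| = 1 by rewrite /F (negbTE ji) eqxx card1.
rewrite card_family_ffun (bigID (fun k : 'I_(s + t) => k < s)) /= mulnC.
rewrite (@prod_const_but_one _ _ i _ (fun k => #|F k|) lt_is card_Fi card_Fs).
rewrite (@prod_const_but_one _ _ j _ (fun k => #|F k|) _ card_Fj card_Ft); last by rewrite -leqNgt.
by rewrite card_ord_lt ?leq_addr // card_ord_geq ?leq_addr // addKn.
Qed.

Lemma sum_Khom_deg_pow (i j : 'I_(s + t)) e1 e2 : i < s -> s <= j ->
  \sum_(psi | Khomb psi) deg G (psi i) ^ e1 * deg G (psi j) ^ e2 <=
  \sum_a \sum_(b | G a b) deg G a ^ (e1 + t.-1) * deg G b ^ (e2 + s.-1).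
Proof.
move=> lt_is le_sj.
rewrite (partition_big (fun psi : {ffun 'I_(s + t) -> 'I_n} => (psi i, psi j))
                       (fun ab : 'I_n * 'I_n => G ab.1 ab.2)) /=; last first.
  move=> psi /forallP /(_ i) /forallP /(_ j) /implyP; apply.
  by rewrite /Kbip lt_is ltnNge le_sj.
rewrite [X in _ <= X](pair_big_dep xpredT (fun a b => G a b)) /=.
apply: leq_sum => -[a b] /= _.
rewrite (eq_bigr (fun _ => deg G a ^ e1 * deg G b ^ e2)); last first.
  by move=> psi /andP [_ /eqP [-> ->]].
rewrite sum_nat_const !expnD mulnACA [X in _ <= X]mulnC leq_mul //.
apply: leq_trans (card_Khom_at_edge a b lt_is le_sj).
by apply: eq_leq; apply: eq_card => psi; rewrite !inE.
Qed.

End CompleteBipartiteImages.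

Section ConvexBound.
Local Open Scope ring_scope.

Lemma prod_le_mean_expr (I : finType) (A : {pred I}) (z : I -> rat) :
  (forall i, 0 <= z i) -> (0 < #|A|)%N ->
  \prod_(i in A) z i <= #|A|%:R^-1 * \sum_(i in A) z i ^+ #|A|.
Proof.
move=> z_ge0 A_gt0.
have [AGM _] := leif_AGM (A := A) (E := fun i => z i ^+ #|A|) (fun i _ => exprn_ge0 _ (z_ge0 i)).
rewrite prodrXl in AGM; rewrite mulrC -(ler_pXn2r A_gt0) //.
  by rewrite nnegrE prodr_ge0.
by rewrite nnegrE divr_ge0 ?ler0n // sumr_ge0 // => i _; apply: exprn_ge0.
Qed.

(* beta i is the fraction of B mapped to i by g (a point mass at i0 if B is empty):
   AM-GM, grouped by the fibres of g. *)
Lemma prod_le_convex_expr (T J : finType) (B : {set T}) (g : T -> J) (P : pred J) (i0 : J) :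
  {in B, forall v, P (g v)} -> P i0 ->
  exists beta : J -> rat, [/\ forall i, 0 <= beta i, \sum_i beta i = 1,
     forall i, beta i != 0 -> P i &
     forall z : J -> rat, (forall i, 0 <= z i) ->
        \prod_(v in B) z (g v) <= \sum_i beta i * z i ^+ #|B| ].
Proof.
move=> PB Pi0; have [B0|B_gt0] := posnP #|B|.
  exists (fun i => (i == i0)%:R); split=> [i||i|z _]; rewrite ?ler0n //.
  - by rewrite (bigD1 i0) //= eqxx big1 ?addr0 // => i /negbTE ->.
  - by case: (eqVneq i i0) => [-> //|]; rewrite eqxx.
  rewrite (eq_bigl (fun=> false)) => [|v]; last by rewrite (card0_eq B0).
  rewrite big_pred0_eq B0 (bigD1 i0) //= eqxx mul1r expr0 big1 ?addr0 // => i /negbTE ->.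
  by rewrite mul0r.
pose fibre i := #|[set v in B | g v == i]|.
have sum_fibre : (\sum_i fibre i)%N = #|B|.
  rewrite -[RHS]sum1_card (partition_big g xpredT) //=; apply: eq_bigr => i _.
  by rewrite /fibre -sum1_card; apply: eq_bigl => v; rewrite inE.
have B_neq0 : #|B|%:R != 0 :> rat by rewrite pnatr_eq0 -lt0n.
exists (fun i => (fibre i)%:R / #|B|%:R); split=> [i||i|z z_ge0].
- by rewrite divr_ge0 ?ler0n.
- by rewrite -mulr_suml -natr_sum sum_fibre mulfV.
- apply: contraR => nPi; rewrite mulf_eq0 pnatr_eq0 cards_eq0; apply/orP; left.
  apply/eqP/setP => v; rewrite !inE; apply/negP => /andP [vB /eqP ai].
  by move: (PB v vB); rewrite ai (negbTE nPi).
apply: le_trans (prod_le_mean_expr (fun v => z_ge0 (g v)) B_gt0) _.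
rewrite (partition_big g xpredT) //= mulr_sumr le_eqVlt; apply/orP; left; apply/eqP.
apply: eq_bigr => i _; rewrite (eq_bigr (fun _ => z i ^+ #|B|)); last by move=> v /andP [_ /eqP ->].
rewrite sumr_const (_ : #|[pred v in B | g v == i]| = fibre i); last first.
  by apply: eq_card => v; rewrite !inE.
by ring.
Qed.

Lemma convex_pair_le (I : finType) (be al : I -> rat) (T : I -> I -> rat) (S : rat) :
  (forall i, 0 <= be i) -> (forall j, 0 <= al j) -> \sum_i be i = 1 -> \sum_j al j = 1 ->
  (forall i j, be i != 0 -> al j != 0 -> T i j <= S) ->
  \sum_i \sum_j be i * al j * T i j <= S.
Proof.
move=> be_ge0 al_ge0 be_sum1 al_sum1 T_le.
apply: (@le_trans _ _ (\sum_i \sum_j be i * al j * S)).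
  apply: ler_sum => i _; apply: ler_sum => j _.
  have [->|be_i] := eqVneq (be i) 0; first by rewrite !mul0r.
  have [->|al_j] := eqVneq (al j) 0; first by rewrite mulr0 !mul0r.
  by apply: ler_wpM2l; [exact: mulr_ge0 | exact: T_le].
under eq_bigr => i _ do rewrite -mulr_suml -mulr_sumr.
by rewrite -mulr_suml -mulr_suml be_sum1 al_sum1 !mul1r.
Qed.

End ConvexBound.

Section Extension.
Variables (h n s t : nat) (H : rel 'I_h) (G : rel 'I_n).
Variables (f : {ffun 'I_(s + t) -> 'I_h}) (anchor : 'I_h -> 'I_(s + t)).
Hypothesis G_sym : symmetric G.
Hypothesis f_hom : homb (@Kbip (s + t) s) H f.
Hypothesis anchorK : forall k, anchor (f k) = k.
Hypothesis anchorH : forall v, v \notin f @: setT -> H v (f (anchor v)).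

Definition attached_s := [set v | (v \notin f @: setT) && (anchor v < s)].
Definition attached_t := [set v | (v \notin f @: setT) && ~~ (anchor v < s)].

Lemma card_hom_le_ext :
  #|[set phi | homb H G phi]| <=
  \sum_(psi | homb (@Kbip (s + t) s) G psi) \prod_(v | v \notin f @: setT) deg G (psi (anchor v)).
Proof.
pose res (phi : {ffun 'I_h -> 'I_n}) : {ffun 'I_(s + t) -> 'I_n} := [ffun k => phi (f k)].
rewrite -sum1_card (partition_big res (homb (@Kbip (s + t) s) G)) /=; last first.
  move=> phi; rewrite inE => /forallP phi_hom; apply/forallP => i; apply/forallP => j.
  apply/implyP => Kij; rewrite !ffunE; apply: (implyP (forallP (phi_hom (f i)) (f j))).
  exact: (implyP (forallP (forallP f_hom i) j) Kij).
apply: leq_sum => psi _.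
pose F v := if v \in f @: setT then pred1 (psi (anchor v)) else [pred y | G (psi (anchor v)) y].
rewrite sum1dep_card.
apply: leq_trans (_ : _ <= #|[set phi : {ffun 'I_h -> 'I_n} | [forall v, phi v \in F v]]|) _.
  apply/subset_leq_card/subsetP => phi; rewrite !inE => /andP [/forallP phi_hom /eqP res_phi].
  apply/forallP => v; rewrite /F -res_phi; case: ifP => [/imsetP [k _ ->]|vf].
    by rewrite anchorK ffunE inE.
  rewrite inE ffunE G_sym; apply: (implyP (forallP (phi_hom v) _)).
  by apply: anchorH; rewrite vf.
rewrite card_family_ffun (bigID (mem (f @: setT))) /= big1 ?mul1n => [|v vf]; last first.
  by rewrite /F vf card1.
apply: eq_leq; apply: eq_bigr => v vf; rewrite /F (negbTE vf).
by apply: eq_card => y; rewrite !inE.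
Qed.

Lemma card_hom_le_edge_sum : 0 < s -> 0 < t ->
  #|[set phi | homb H G phi]| <=
  \sum_a \sum_(b | G a b) deg G a ^ (#|attached_s| + t.-1) * deg G b ^ (#|attached_t| + s.-1).
Proof.
move=> s_gt0 t_gt0; set S := (\sum_a _)%N.
have lt_0_st : 0 < s + t by rewrite addn_gt0 s_gt0.
have lt_s_st : s < s + t by rewrite -{1}(addn0 s) ltn_add2l.
have attached_s_lt : {in attached_s, forall v, anchor v < s} by move=> v /[!inE] /andP [].
have attached_t_geq : {in attached_t, forall v, s <= anchor v}.
  by move=> v /[!inE] /andP [_]; rewrite -leqNgt.
have [be [be_ge0 be_sum1 be_supp be_bound]] :=
  @prod_le_convex_expr _ _ _ anchor (fun i => i < s) (Ordinal lt_0_st) attached_s_lt s_gt0.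
have [al [al_ge0 al_sum1 al_supp al_bound]] :=
  @prod_le_convex_expr _ _ _ anchor (fun i => s <= i) (Ordinal lt_s_st) attached_t_geq (leqnn s).
pose degR (psi : {ffun 'I_(s + t) -> 'I_n}) i := ((deg G (psi i))%:R : rat)%R.
have degR_ge0 psi i : (0 <= degR psi i)%R by rewrite ler0n.
have split_prod (psi : {ffun 'I_(s + t) -> 'I_n}) :
    ((\prod_(v | v \notin f @: setT) deg G (psi (anchor v)))%:R <=
     \sum_i \sum_j be i * al j * (degR psi i ^+ #|attached_s| * degR psi j ^+ #|attached_t|)
     :> rat)%R.
  rewrite natr_prod (bigID (fun v => anchor v < s)) /=.
  rewrite [X in (X * _)%R](eq_bigl (mem attached_s)); last by move=> v; rewrite !inE.
  rewrite [X in (_ * X)%R](eq_bigl (mem attached_t)); last by move=> v; rewrite !inE.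
  apply: le_trans (ler_pM _ _ (be_bound _ (degR_ge0 psi)) (al_bound _ (degR_ge0 psi))) _;
    try by apply: prodr_ge0 => v _; rewrite ler0n.
  by rewrite mulr_suml le_eqVlt; apply/orP; left; apply/eqP; apply: eq_bigr => i _;
    rewrite mulr_sumr; apply: eq_bigr => j _; ring.
rewrite -(ler_nat rat); apply: (@le_trans _ _ (\sum_(psi | homb (@Kbip (s + t) s) G psi)
    \prod_(v | v \notin f @: setT) deg G (psi (anchor v)))%:R%R).
  by rewrite ler_nat card_hom_le_ext.
rewrite natr_sum; apply: le_trans (ler_sum _ (fun psi _ => split_prod psi)) _.
rewrite (exchange_big_dep xpredT) //=.
under eq_bigr => i _ do rewrite (exchange_big_dep xpredT) //=.
under eq_bigr => i _ do under eq_bigr => j _ do rewrite -mulr_sumr.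
apply: convex_pair_le => // i j /be_supp lt_is /al_supp le_sj.
under eq_bigl do rewrite !andbT.
rewrite (eq_bigr (fun psi : {ffun 'I_(s + t) -> 'I_n} =>
  (deg G (psi i) ^ #|attached_s| * deg G (psi j) ^ #|attached_t|)%:R : rat)%R);
  last by move=> psi _; rewrite natrM !natrX.
by rewrite -natr_sum ler_nat sum_Khom_deg_pow.
Qed.

Lemma card_split_image (P : pred 'I_h) (Q R : pred 'I_(s + t)) :
  (forall k, P (f k) = Q k) -> (forall v, v \notin f @: setT -> P v = R (anchor v)) ->
  #|[set v | P v]| = #|[set k | Q k]| + #|[set v | (v \notin f @: setT) && R (anchor v)]|.
Proof.
move=> Pf Pout; rewrite -(cardsID (f @: setT) [set v | P v]); congr (_ + _).
  rewrite -(card_imset _ (can_inj anchorK)); apply: eq_card => v; rewrite !inE.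
  apply/andP/imsetP => [[Pv /imsetP [k _ vE]]|[k /[!inE] Qk ->]].
    by exists k => //; rewrite inE -Pf -vE.
  by rewrite Pf imset_f.
apply: eq_card => v; rewrite !inE.
by case: (boolP (v \in f @: setT)) => [|vf] /=; rewrite ?andbF // Pout.
Qed.

End Extension.

Lemma lower_order_negligible (C h : nat) (eps : rat) : 0 < h -> (0 < eps)%R ->
  exists N, forall n, N <= n -> ((C * n ^ h.-1)%:R <= eps * (n ^ h)%:R :> rat)%R.
Proof.
move=> h_gt0 eps_gt0; set D := Num.bound eps^-1.
have eps_D : (1 <= eps * D%:R)%R.
  rewrite -[X in (X <= _)%R](mulfV (lt0r_neq0 eps_gt0)) ler_pM2l //; apply: ltW.
  by apply: archi_boundP; rewrite invr_ge0 ltW.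
exists (C * D) => n le_CD_n.
have -> : n ^ h = n * n ^ h.-1 by rewrite -expnS prednK.
rewrite !natrM mulrA; apply: ler_wpM2r; first exact: ler0n.
apply: (@le_trans _ _ (eps * (C * D)%:R)%R); last by rewrite ler_pM2l // ler_nat.
by rewrite natrM mulrCA; apply: ler_peMr; rewrite ?ler0n.
Qed.

Section Assembly.
Variables (s t h : nat) (H : rel 'I_h) (c : 'I_h -> bool) (f : {ffun 'I_(s + t) -> 'I_h}).
Hypotheses (s_gt0 : 0 < s) (t_gt0 : 0 < t).
Hypothesis c_proper : forall x y, H x y -> c x != c y.
Hypothesis f_inj_hom : inj_homb (@Kbip (s + t) s) H f.
Hypothesis f_dom : forall v, dist_le1 H (f @: setT) v.

Definition first_s : 'I_(s + t) := Ordinal (leq_trans s_gt0 (leq_addr t s)).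
Lemma s_lt_st : s < s + t. Proof. by rewrite -addn1 leq_add2l. Qed.
Definition first_t : 'I_(s + t) := Ordinal s_lt_st.

Lemma order_gt0 : 0 < h.
Proof. by case: (f first_s) => v; apply: leq_trans. Qed.

Definition anchor (v : 'I_h) : 'I_(s + t) :=
  if [pick k | f k == v] is Some k then k else odflt first_s [pick k | H v (f k)].

Lemma anchorK k : anchor (f k) = k.
Proof.
case/andP: f_inj_hom => /injectiveP f_inj _.
by rewrite /anchor; case: pickP => [k' /eqP /f_inj //|/(_ k)]; rewrite eqxx.
Qed.

Lemma anchorH v : v \notin f @: setT -> H v (f (anchor v)).
Proof.
move=> vf; rewrite /anchor; case: pickP => [k /eqP vE|_]; first by rewrite -vE imset_f in vf.
case: pickP => [k //|none]; case: (f_dom v) => [vf'|[u /imsetP [k _ ->] Hvu]].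
  by rewrite vf' in vf.
by have := none k; rewrite Hvu.
Qed.

Definition col v := c v == c (f first_s).

Lemma col_proper x y : H x y -> col x != col y.
Proof. by move/c_proper; rewrite /col; case: (c x); case: (c y); case: (c (f first_s)). Qed.

Lemma col_f k : col (f k) = (k < s).
Proof.
have cK (i j : 'I_(s + t)) : (i < s) != (j < s) -> col (f i) != col (f j).
  by move=> ij; apply/col_proper/(implyP (forallP (forallP (inj_homb_homb f_inj_hom) i) j)).
have col_first_s : col (f first_s) by rewrite /col.
case: ltnP => ks.
  have := cK k first_t; have := cK first_s first_t; rewrite /= ks s_gt0 ltnn => /(_ isT) + /(_ isT).
  by rewrite col_first_s; case: (col _); case: (col _).
have := cK first_s k; rewrite /= s_gt0 ltnNge ks col_first_s => /(_ isT).
by case: (col _).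
Qed.

Lemma col_anchor v : v \notin f @: setT -> col v = ~~ (anchor v < s).
Proof. by move=> /anchorH /col_proper; rewrite col_f; case: (col v); case: (_ < s). Qed.

Lemma card_col : #|[set v | col v]| = s + #|attached_t f anchor|.
Proof.
rewrite (card_split_image (R := fun k => ~~ (k < s)) anchorK col_f col_anchor).
by rewrite card_ord_lt // leq_addr.
Qed.

Lemma card_ncol : #|[set v | ~~ col v]| = t + #|attached_s f anchor|.
Proof.
have ncol_f k : ~~ col (f k) = ~~ (k < s) by rewrite col_f.
have ncol_anchor v : v \notin f @: setT -> ~~ col v = (anchor v < s).
  by move/col_anchor ->; rewrite negbK.
rewrite (card_split_image (P := fun v => ~~ col v) (Q := fun k => ~~ (k < s))
  (R := fun k => k < s) anchorK ncol_f ncol_anchor).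
by rewrite card_ord_geq ?leq_addr // addKn.
Qed.

Lemma card_hom_le_max_bip_maps n (G : rel 'I_n) :
  symmetric G -> (forall a b u, G a b -> G b u -> G u a -> False) ->
  #|[set phi | homb H G phi]| <= max_bip_maps n #|[set v | col v]| #|[set v | ~~ col v]|.
Proof.
move=> G_sym G_tf.
have f_hom := inj_homb_homb f_inj_hom.
apply: leq_trans (card_hom_le_edge_sum G_sym f_hom anchorK anchorH s_gt0 t_gt0) _.
rewrite card_col card_ncol.
have -> : #|attached_s f anchor| + t.-1 = (t + #|attached_s f anchor|).-1 by lia.
have -> : #|attached_t f anchor| + s.-1 = (s + #|attached_t f anchor|).-1 by lia.
by apply: sum_edges_deg_pow; rewrite // addn_gt0 ?s_gt0 ?t_gt0.
Qed.

Lemma max_bip_maps_le n : max_bip_maps n #|[set v | col v]| #|[set v | ~~ col v]| <=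
  max_bip H n * #|aut H| + h * h * n ^ h.-1.
Proof.
apply/bigmax_leqP => m _; have le_mn : m <= n by rewrite -ltnS.
apply: leq_trans (card_hom_Kbip_ge le_mn col_proper order_gt0) _.
apply: leq_trans (card_hom_le_inj H (@Kbip n m)) _.
by rewrite -copies_mul_aut leq_add2r leq_mul2r (leq_bigmax m) orbT.
Qed.

Lemma ex_K3_le n : ex_K3 H n <= max_bip H n + h * h * n ^ h.-1.
Proof.
apply/bigmax_leqP => g /andP [/andP [/forallP g_sym _] g_tf].
have G_sym : symmetric (graph_of g) by move=> x y; apply/eqP/(forallP (g_sym x)).
have G_tf a b u : graph_of g a b -> graph_of g b u -> graph_of g u a -> False.
  by move=> Gab Gbu Gua; move/negP: g_tf; apply; apply/existsP; exists a;
    apply/existsP; exists b; apply/existsP; exists u; apply/and3P.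
rewrite -(leq_pmul2r (aut_gt0 H)) mulnDl copies_mul_aut.
apply: leq_trans (_ : _ <= #|[set phi | homb H (graph_of g) phi]|) _.
  by apply/subset_leq_card/subsetP => phi; rewrite !inE; apply: inj_homb_homb.
apply: leq_trans (card_hom_le_max_bip_maps G_sym G_tf) _.
by apply: leq_trans (max_bip_maps_le n) _; rewrite leq_add2l leq_pmulr ?aut_gt0.
Qed.

End Assembly.

Theorem mainTheorem2 (s t h : nat) (H : rel 'I_h) :
  1 <= s -> 1 <= t ->
  is_graph H -> bipartite H ->
  (exists f : {ffun 'I_(s + t) -> 'I_h},
      inj_homb (@Kbip (s + t) s) H f /\
      forall v : 'I_h, dist_le1 H (f @: setT) v) ->
  forall eps : rat, (0 < eps)%R ->
  exists N : nat, forall n : nat, N <= n ->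
    (`| ((ex_K3 H n)%:R - (max_bip H n)%:R : rat) | <= eps * (n ^ h)%:R)%R.
Proof.
move=> s_gt0 t_gt0 _ [c c_proper] [f [f_inj_hom f_dom]] eps eps_gt0.
have [N small] := lower_order_negligible (h * h) (order_gt0 f s_gt0) eps_gt0.
exists N => n le_Nn; have le_max_ex := max_bip_le_ex_K3 H n.
rewrite ger0_norm ?subr_ge0 ?ler_nat // lerBlDl.
apply: le_trans (_ : _ <= (max_bip H n + h * h * n ^ h.-1)%:R)%R _.
  by rewrite ler_nat (ex_K3_le s_gt0 t_gt0 c_proper f_inj_hom f_dom).
by rewrite natrD lerD2l small.
Qed.
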